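(* Let $n$ be even. Take $n$ oriented triangles, each labeled and identified with the standard oriented 2-simplex, and pair their $3n$ sides by a uniformly random perfect matching; glue each pair of sides by the unique identification compatible with the orientations, producing a closed oriented (possibly disconnected) surface $\Sigma$. Then the expected number of vertices of $\Sigma$ is at most $\tfrac{3}{2}\log(n)+6$ (natural logarithm).
   Context: This random gluing produces the uniform distribution on the set of labeled oriented triangulated surfaces built from $n$ triangles (triangulations here are just assemblages of triangles with sides glued in pairs, not necessarily simplicial complexes). The vertices of $\Sigma$ are the equivalence classes of triangle corners after gluing. *)

From mathcomp Require Import all_boot all_order all_algebra all_fingroup.
From mathcomp Require Import all_classical all_reals all_analysis.
Set Implicit Arguments. Unset Strict Implicit. Unset Printing Implicit Defensive.

(* Triangle t has corners (t,0),(t,1),(t,2) in counterclockwise order;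
   side (t,i) is the oriented side going from corner (t,i) to corner (t,i+1 mod 3). *)
Definition side (n : nat) := ('I_n * 'I_3)%type.
Definition corner (n : nat) := ('I_n * 'I_3)%type.

Definition is_matching (n : nat) (m : {perm side n}) : bool :=
  [forall x, (m x != x) && (m (m x) == x)].

Definition matchings (n : nat) : {set {perm side n}} :=
  [set m | is_matching m].

(* Orientation-compatible gluing of side x = (t,i) with side y = (s,j):
   corner (t,i) ~ corner (s,j+1) and corner (t,i+1) ~ corner (s,j). *)
Definition glue_rel (n : nat) (m : {perm side n}) : rel (corner n) :=
  fun c d => [exists x : side n,
    ((c == (x.1, x.2)) && (d == ((m x).1, ordS (m x).2)))
    || ((c == (x.1, ordS x.2)) && (d == ((m x).1, (m x).2)))].

Definition sym_glue_rel (n : nat) (m : {perm side n}) : rel (corner n) :=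
  fun c d => glue_rel m c d || glue_rel m d c.

Definition vertices (n : nat) (m : {perm side n}) : {set {set corner n}} :=
  [set [set d | connect (sym_glue_rel m) c d] | c : corner n].

Definition num_vertices (n : nat) (m : {perm side n}) : nat := #|vertices m|.

Definition expected_vertices (R : realType) (n : nat) : R :=
  ((\sum_(m in matchings n) (num_vertices m)%:R) / (#|matchings n|)%:R)%R.

From mathcomp Require Import all_boot all_order all_algebra all_fingroup.
From mathcomp Require Import all_classical all_reals all_analysis.
From mathcomp Require Import zify ring lra.
Import Order.TTheory GRing.Theory Num.Theory.
Set Implicit Arguments. Unset Strict Implicit. Unset Printing Implicit Defensive.

(** A side [(t, i)] is identified with its initial corner. A matching [m] of the
    sides glues each corner [c] to the corner following [m c], so the vertices are the
    cycles of [m * rotate], where [rotate] turns every triangle by one corner. More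
    generally, for a permutation [s] of a finite set [T] and [D \subset T], the average
    number of cycles of [m * s] over the perfect matchings [m] of [D] is at most
    [cycle_bound D s]. For the induction step fix [x \in D] and average over its
    partner [y]: the rest of the matching acts on [glue s x y], obtained from
    [(x y) * s] by cutting [x] and [y] out of their cycles. The potential pays for the
    fixed points this creates, up to [proximity s x y / 2], which is nonzero only when
    [y] lies within distance two of [x] along [s] and sums to at most 3 over all [y];
    this costs [3 / (#|D| - 1)] on average. Finally
    [3 * harm2 (3n) <= 3 + (3/2) ln (3n - 1)] for even [n]. *)

Section Matchings.
Variable T : finType.
Implicit Types (m : {perm T}) (D : {set T}) (x y z : T).

Definition matchings_on D : {set {perm T}} :=
  [set m : {perm T} | [forall z, if z \in D then (m z != z) && (m (m z) == z) else m z == z]].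

Lemma matchings_onP D m :
  reflect ((forall z, z \in D -> m z != z /\ m (m z) = z) /\ (forall z, z \notin D -> m z = z))
          (m \in matchings_on D).
Proof.
rewrite inE; apply: (iffP forallP) => [H|[H1 H2] z].
  split=> z Hz; have := H z; rewrite ?Hz ?(negbTE Hz).
    by case/andP=> -> /eqP.
  by move/eqP.
case: ifP => Hz; first by have [-> ->] := H1 z Hz; rewrite eqxx.
by rewrite H2 ?Hz.
Qed.

Lemma matchings_on_set0 : matchings_on finset.set0 = [set 1%g]%SET.
Proof.
apply/setP => m; rewrite finset.in_set1; apply/matchings_onP/eqP => [[_ H]|->].
  by apply/permP => z; rewrite perm1 H ?inE.
by split=> z; rewrite ?inE // perm1.
Qed.

Lemma matching_partner_in D m x : m \in matchings_on D -> x \in D -> m x \in D :\ x.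
Proof.
move=> /matchings_onP[H1 H2] Hx; have [ne inv] := H1 x Hx.
rewrite !inE ne /=; apply: contraT => Hn.
by move: ne; rewrite -{2}inv (H2 _ Hn) eqxx.
Qed.

Lemma matchings_on_remove_pair D x y m : x \in D -> y \in D :\ x ->
  m \in matchings_on D -> m x = y -> (tperm x y * m)%g \in matchings_on (D :\ x :\ y).
Proof.
move=> Hx /setD1P[nyx Hy] /matchings_onP[H1 H2] mx.
have my : m y = x by rewrite -mx (proj2 (H1 x Hx)).
apply/matchings_onP; split=> z; rewrite !inE ?negb_and ?negbK.
  case/and3P=> nzy nzx Hz; rewrite !permM tpermD 1?eq_sym //.
  have [ne inv] := H1 z Hz.
  have mzx : m z != x by apply: contraNneq nzy => e; rewrite -inv e mx.
  have mzy : m z != y by apply: contraNneq nzx => e; rewrite -inv e my.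
  by rewrite tpermD 1?eq_sym // inv ne.
rewrite permM; case/or3P => [/eqP->|/eqP->|Hz]; first by rewrite tpermR.
  by rewrite tpermL.
have zx : z != x by apply: contraNneq Hz => ->.
have zy : z != y by apply: contraNneq Hz => ->.
by rewrite tpermD 1?eq_sym // H2.
Qed.

Lemma matchings_on_add_pair D x y m : x \in D -> y \in D :\ x ->
  (tperm x y * m)%g \in matchings_on (D :\ x :\ y) -> m \in matchings_on D /\ m x = y.
Proof.
move=> Hx /setD1P[nyx Hy] /matchings_onP[H1 H2].
have mx : m x = y by have := H2 y; rewrite !inE eqxx permM tpermR => ->.
have my : m y = x by have := H2 x; rewrite !inE eqxx andbF permM tpermL => ->.
split=> //; apply/matchings_onP; split=> z Hz.
  have [->|zx] := eqVneq z x; first by rewrite mx my nyx.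
  have [->|zy] := eqVneq z y; first by rewrite my mx eq_sym nyx.
  have [ne inv] := H1 z ltac:(by rewrite !inE zx zy Hz).
  rewrite !permM in ne inv; rewrite tpermD 1?eq_sym // in ne inv.
  have Hmz : m z \in D :\ x :\ y.
    apply: contraT => Hn; have := H2 _ Hn; rewrite permM => e.
    by move: ne; rewrite -e inv eqxx.
  move: Hmz; rewrite !inE => /and3P[mzy mzx _].
  rewrite tpermD 1?eq_sym // in inv.
  by split=> //; rewrite eq_sym.
have zx : z != x by apply: contraNneq Hz => ->.
have zy : z != y by apply: contraNneq Hz => ->.
have := H2 z; rewrite !inE (negbTE Hz) !andbF => /(_ isT).
by rewrite permM tpermD 1?eq_sym.
Qed.

Lemma matchings_on_tperm D x y m : x \in D -> y \in D :\ x ->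
  (m \in matchings_on D) && (m x == y) = ((tperm x y * m)%g \in matchings_on (D :\ x :\ y)).
Proof.
move=> Hx Hy; apply/andP/idP => [[Hm /eqP mx]|/matchings_on_add_pair[] // -> ->].
  exact: matchings_on_remove_pair.
by rewrite eqxx.
Qed.

Lemma big_matchings_on (R : Type) (idx : R) (op : Monoid.com_law idx) D x
    (F : {perm T} -> R) : x \in D ->
  \big[op/idx]_(m in matchings_on D) F m =
  \big[op/idx]_(y in D :\ x) \big[op/idx]_(m in matchings_on (D :\ x :\ y)) F (tperm x y * m)%g.
Proof.
move=> Hx; rewrite (partition_big (fun m : {perm T} => m x) (mem (D :\ x))) /=; last first.
  by move=> m Hm; apply: matching_partner_in.
apply: eq_bigr => y Hy.
rewrite -(big_imset _ (h := mulg (tperm x y))) /=; last by move=> m1 m2 _ _; apply: mulgI.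
apply: eq_bigl => m; rewrite matchings_on_tperm //.
apply/idP/imsetP => [H|[k Hk ->]]; last by rewrite mulgA tperm2 mul1g.
by exists (tperm x y * m)%g => //; rewrite mulgA tperm2 mul1g.
Qed.

Fixpoint nmatch (k : nat) : nat :=
  match k with 0 => 1 | 1 => 0 | k'.+2 => k'.+1 * nmatch k' end.

Lemma card_matchings_on D : #|matchings_on D| = nmatch #|D|.
Proof.
move Hk: #|D| => k; elim/ltn_ind: k D Hk => k IH D Hk.
case: k IH Hk => [|k] IH Hk.
  by move/eqP: Hk; rewrite cards_eq0 => /eqP->; rewrite matchings_on_set0 cards1.
have [x Hx] : exists x, x \in D by apply/set0Pn; rewrite -card_gt0 Hk.
have HDx : #|D :\ x| = k by move: Hk; rewrite (cardsD1 x D) Hx add1n => -[].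
rewrite -sum1_card (big_matchings_on _ _ Hx).
rewrite (eq_bigr (fun _ => nmatch k.-1)) => [|y Hy]; last first.
  rewrite sum1_card (IH k.-1) //; first by case: (k) HDx.
  by move: HDx; rewrite (cardsD1 y (D :\ x)) Hy add1n => <-.
by rewrite sum_nat_const HDx; case: k HDx {IH Hk}.
Qed.

End Matchings.

Section Excision.
Variable T : finType.
Implicit Types (g p : {perm T}) (A : {set T}) (c x y z : T).

Definition excise c p : {perm T} := (tperm c ((p^-1)%g c) * p)%g.

Lemma porbits_excise c p : #|porbits (excise c p)| = #|porbits p| + (p c != c).
Proof.
have := porbits_mul_tperm p c ((p^-1)%g c).
have -> : c \in porbit p ((p^-1)%g c).
  by have := mem_porbit p 1 ((p^-1)%g c); rewrite expg1 permKV.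
rewrite /= addn0 => ->; congr (_ + nat_of_bool _).
by rewrite [c == _]eq_sym (canF_eq (permKV p)) eq_sym.
Qed.

Lemma excise_at c p z : excise c p z = if z == c then c else if p z == c then p c else p z.
Proof.
rewrite permM; case: (tpermP c ((p^-1)%g c) z) => [->|->|zc za]; rewrite ?eqxx ?permKV //.
  by rewrite eqxx; case: eqP => // e; rewrite -{1}e permKV.
by rewrite (introF eqP zc) (canF_eq (permK p)) (introF eqP za).
Qed.

Lemma mul_tperm_fixed g c a : g c = c -> (g * tperm c a = tperm c ((g^-1)%g a) * g)%g.
Proof.
move=> gc; apply/permP => z; rewrite !permM.
case: (tpermP c ((g^-1)%g a) z) => [->|->|zc za].
- by rewrite gc tpermL permKV.
- by rewrite permKV tpermR.
have gzc : c != g z by apply/eqP => e; apply: zc; apply: (@perm_inj _ g); rewrite -e gc.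
have gza : a != g z by apply/eqP => e; apply: za; rewrite e permK.
by rewrite tpermD.
Qed.

Lemma porbits_mul_excise g p c : g c = c ->
  #|porbits (g * excise c p)%g| = #|porbits (g * p)%g| + (p c != c).
Proof.
move=> gc; rewrite /excise mulgA mul_tperm_fixed //.
have -> : (g^-1)%g ((p^-1)%g c) = ((g * p)^-1)%g c by rewrite invMg permM.
by rewrite -mulgA (porbits_excise c (g * p)) permM gc.
Qed.

Definition nfix p A : nat := \sum_(z in A) (p z == z).

Definition in_2cycle p c : bool := (p c != c) && (p (p c) == c).

Lemma nfix_setD1 p A c : c \in A -> nfix p A = (p c == c) + nfix p (A :\ c).
Proof.
move=> Hc; rewrite /nfix (bigD1 c Hc); congr (_ + _).
by apply: eq_bigl => z; rewrite !inE andbC.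
Qed.

Lemma nfix_tperm_mul p A x y : x \in A -> y \in A -> x != y ->
  nfix (tperm x y * p)%g A + (p x == x) + (p y == y) = nfix p A + (p y == x) + (p x == y).
Proof.
move=> Hx Hy nxy.
have Hy' : (y \in A) && (y != x) by rewrite Hy eq_sym nxy.
rewrite /nfix (bigD1 x Hx) (bigD1 y Hy') /= (bigD1 x Hx) (bigD1 y Hy') /=.
rewrite !permM tpermL tpermR.
rewrite (eq_bigr (fun z => nat_of_bool (p z == z))) => [|z /andP[/andP[_ zx] zy]]; first lia.
by rewrite permM tpermD // eq_sym.
Qed.

Lemma nfix_excise p A c : c \notin A -> nfix (excise c p) A <= nfix p A + in_2cycle p c.
Proof.
move=> Hc; set a := (p^-1)%g c.
have excE z : z \in A -> z != a -> excise c p z = p z.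
  move=> Hz za; have zc : z != c by apply: contraNneq Hc => <-.
  by rewrite permM tpermD // eq_sym.
have [Ha|Ha] := boolP (a \in A); last first.
  rewrite /nfix (eq_bigr (fun z => nat_of_bool (p z == z))) ?leq_addr // => z Hz.
  by rewrite excE //; apply: contraNneq Ha => <-.
rewrite /nfix (bigD1 a Ha) (bigD1 a Ha) /=.
rewrite (eq_bigr (fun z => nat_of_bool (p z == z))) => [|z /andP[Hz za]]; last by rewrite excE.
have nac : a != c by apply: contraNneq Hc => <-.
have -> : in_2cycle p c = (p c == a).
  rewrite /in_2cycle [p (p c) == c](canF_eq (permK p)) -/a.
  by rewrite [p c == c]eq_sym -(canF_eq (permKV p)) -/a nac.
by rewrite permM tpermR; lia.
Qed.

End Excision.

Local Ltac forget_bools :=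
  repeat match goal with |- context [nat_of_bool ?b] => move: (nat_of_bool b) => ? end.

Section Gluing.
Variable T : finType.
Implicit Types (s m : {perm T}) (A D : {set T}) (x y z : T).

Definition half_glue s x y : {perm T} := excise x (tperm x y * s)%g.
Definition glue s x y : {perm T} := excise y (half_glue s x y).
Definition glue_new_cycles s x y : nat := (s y != x) + (half_glue s x y y != y).
Definition proximity s x y : nat :=
  2 * (s x == y) + 2 * (s y == x) + (s (s x) == y) + (s (s y) == x).

Lemma porbits_glue s m x y : m x = x -> m y = y ->
  #|porbits (tperm x y * m * s)%g| + glue_new_cycles s x y = #|porbits (m * glue s x y)%g|.
Proof.
move=> mx my.
have -> : (tperm x y * m = m * tperm x y)%g by rewrite mul_tperm_fixed // -{2}my permK.
rewrite /glue porbits_mul_excise // /half_glue porbits_mul_excise // -mulgA.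
by rewrite permM tpermL addnA.
Qed.

Lemma half_glue_at s x y z : half_glue s x y z =
  if z == x then x else if s (tperm x y z) == x then s y else s (tperm x y z).
Proof. by rewrite /half_glue excise_at !permM tpermL. Qed.

Lemma in_2cycle_glue_le s x y : x != y ->
  (half_glue s x y y == y) + in_2cycle (tperm x y * s)%g x + in_2cycle (half_glue s x y) y
  <= (s x == x) + (s y == y) + (s x == y) + (s (s x) == y) + (s (s y) == x).
Proof.
move=> nxy; have sI := @perm_inj _ s.
have hy : half_glue s x y y = if s x == x then s y else s x.
  by rewrite half_glue_at eq_sym (negbTE nxy) tpermR.
have s1E w : (tperm x y * s)%g w = s (tperm x y w) by rewrite permM.
rewrite /in_2cycle hy !s1E tpermL.
have [sx|sx] := eqVneq (s x) x.
  have sxE w : (s w == x) = (w == x) by rewrite -{1}sx (inj_eq sI).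
  have tE w : (tperm x y w == x) = (w == y) by rewrite (canF_eq (tpermK x y)) tpermL.
  rewrite !sxE tE !sx (negbTE nxy) [y == x]eq_sym (negbTE nxy).
  by case: (s y == y); case: (_ == _).
set x2 := (s y != x) && _.
have x2_le : x2 <= (s (s y) == x).
  rewrite /x2; have [->|syy] := eqVneq (s y) y; first by rewrite tpermR (negbTE sx) andbF.
  by have [//|syx] := eqVneq (s y) x; rewrite tpermD // eq_sym.
have x2_excl : x2 + (s y == y) <= 1.
  rewrite /x2; have [->|syy] := eqVneq (s y) y; last by rewrite addn0 leq_b1.
  by rewrite tpermR (negbTE sx) andbF.
have [sxy|sxy] := eqVneq (s x) y; first by rewrite /=; lia.
have [xsx ysx] : x != s x /\ y != s x by rewrite ![_ == s x]eq_sym.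
rewrite /= half_glue_at (negbTE sx) (tpermD xsx ysx).
have y2_le : (if s (s x) == x then s y else s (s x)) == y <= (s y == y) + (s (s x) == y).
  by case: ifP => _; rewrite ?leq_addr ?leq_addl.
move: x2_le x2_excl y2_le; clearbody x2; forget_bools; lia.
Qed.

Lemma nfix_glue s D x y : x \in D -> y \in D :\ x ->
  nfix (glue s x y) (D :\ x :\ y) + 4 <= nfix s D + proximity s x y + 2 * glue_new_cycles s x y.
Proof.
move=> Hx Hy; have /setD1P[nyx Hy0] := Hy.
have nxy : x != y by rewrite eq_sym.
have fix_swap := nfix_tperm_mul s Hx Hy0 nxy.
have fix_split_x := nfix_setD1 (tperm x y * s)%g Hx.
have fix_cut_x := @nfix_excise _ (tperm x y * s)%g (D :\ x) x ltac:(by rewrite !inE eqxx).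
have fix_split_y := nfix_setD1 (half_glue s x y) Hy.
have fix_cut_y := @nfix_excise _ (half_glue s x y) (D :\ x :\ y) y ltac:(by rewrite !inE eqxx).
have two_cycles := in_2cycle_glue_le s nxy.
rewrite permM tpermL in fix_split_x.
have negb_sy : (s y != x) + (s y == x) = 1 by case: (_ == _).
have negb_hy : (half_glue s x y y != y) + (half_glue s x y y == y) = 1 by case: (_ == _).
rewrite /proximity /glue_new_cycles /glue -/(half_glue s x y).
move: fix_swap fix_split_x fix_cut_x fix_split_y fix_cut_y two_cycles negb_sy negb_hy.
rewrite -/(half_glue s x y); forget_bools; lia.
Qed.

Lemma sum_eq_le1 A z : \sum_(y in A) (y == z) <= 1.
Proof.
have [Hz|Hz] := boolP (z \in A).
  by rewrite (bigD1 z Hz) eqxx big1 // => y /andP[_ /negbTE->].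
by rewrite big1 // => y Hy; apply/eqP; rewrite eqb0; apply: contraNneq Hz => <-.
Qed.

Lemma sum_proximity_le s x A : \sum_(y in A) proximity s x y <= 6.
Proof.
pose z1 := s x; pose z2 := (s^-1)%g x; pose z3 := s (s x); pose z4 := (s^-1)%g ((s^-1)%g x).
rewrite (eq_bigr (fun y => (y == z1) + (y == z1) + (y == z2) + (y == z2) + (y == z3) + (y == z4)))
  => [|y _]; last by rewrite /proximity /z1 /z2 /z3 /z4 !(eq_sym (s _) y) !(canF_eq (permK s)); lia.
rewrite !big_split /=.
have := sum_eq_le1 A z1; have := sum_eq_le1 A z2; have := sum_eq_le1 A z3; have := sum_eq_le1 A z4.
lia.
Qed.

End Gluing.

Section CycleBound.
Local Open Scope ring_scope.
Variable R : realFieldType.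
Variable T : finType.
Implicit Types (s m : {perm T}) (D : {set T}) (x y : T).

Fixpoint harm2 (j : nat) : R := if j is j'.+2 then harm2 j' + (j'.+1)%:R^-1 else 0.

Lemma harm2_ge0 j : 0 <= harm2 j.
Proof.
elim/ltn_ind: j => [[|[|j]]] IH //=.
by rewrite addr_ge0 ?IH // invr_ge0.
Qed.

Definition cycle_bound D s : R := #|~: D|%:R + 3 * harm2 #|D| + (nfix s D)%:R / 2.

Lemma cycle_bound_glue D s x y : x \in D -> y \in D :\ x ->
  cycle_bound (D :\ x :\ y) (glue s x y) - (glue_new_cycles s x y)%:R
  <= #|~: D|%:R + 3 * harm2 #|D :\ x :\ y| + (nfix s D)%:R / 2 + (proximity s x y)%:R / 2.
Proof.
move=> Hx Hy.
have HC : #|~: (D :\ x :\ y)| = (#|~: D| + 2)%N.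
  have := cardsC (D :\ x :\ y); have := cardsC D.
  have := cardsD1 x D; have := cardsD1 y (D :\ x); rewrite Hx Hy; lia.
have := nfix_glue s Hx Hy; rewrite -(ler_nat R) !natrD.
rewrite /cycle_bound HC natrD; lra.
Qed.

Lemma sum_porbits_pair D s x y : x \in D -> y \in D :\ x ->
  let D' := D :\ x :\ y in
  \sum_(m in matchings_on D') (#|porbits (m * glue s x y)%g|)%:R
    <= (#|matchings_on D'|)%:R * cycle_bound D' (glue s x y) ->
  \sum_(m in matchings_on D') (#|porbits (tperm x y * m * s)%g|)%:R
    <= (#|matchings_on D'|)%:R
       * (#|~: D|%:R + 3 * harm2 #|D'| + (nfix s D)%:R / 2 + (proximity s x y)%:R / 2).
Proof.
move=> Hx Hy D' IH.
rewrite (eq_bigr (fun m => (#|porbits (m * glue s x y)%g|)%:R - (glue_new_cycles s x y)%:R))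
  => [|m /matchings_onP[_ fixD']]; last first.
  by rewrite -porbits_glue ?fixD' ?natrD ?addrK // !inE eqxx ?andbF.
rewrite sumrB sumr_const -[_ *+ #|_|]mulr_natl.
apply: le_trans (lerB IH (lexx _)) _.
by rewrite -mulrBr ler_wpM2l ?ler0n ?cycle_bound_glue.
Qed.

Lemma sum_porbits_matchings_on D s :
  \sum_(m in matchings_on D) (#|porbits (m * s)%g|)%:R <= (#|matchings_on D|)%:R * cycle_bound D s.
Proof.
move Hk: #|D| => k; elim/ltn_ind: k D s Hk => k IH D s Hk.
case: k IH Hk => [|[|k]] IH Hk.
- move/eqP: Hk; rewrite cards_eq0 => /eqP->.
  rewrite matchings_on_set0 big_set1 mul1g cards1 mul1r /cycle_bound finset.setC0 cardsT.
  rewrite cards0 /= mulr0 addr0 /nfix big_set0 mul0r addr0 ler_nat.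
  exact: leq_imset_card.
- have : #|matchings_on D| == 0%N by rewrite card_matchings_on Hk.
  by rewrite cards_eq0 => /eqP->; rewrite big_set0 cards0 mul0r.
have [x Hx] : exists x, x \in D by apply/set0Pn; rewrite -card_gt0 Hk.
have HDx : #|D :\ x| = k.+1 by move: Hk; rewrite (cardsD1 x D) Hx add1n => -[].
set c : R := #|~: D|%:R + 3 * harm2 k + (nfix s D)%:R / 2.
have step y : y \in D :\ x ->
    \sum_(m in matchings_on (D :\ x :\ y)) (#|porbits (tperm x y * m * s)%g|)%:R
    <= (nmatch k)%:R * (c + (proximity s x y)%:R / 2).
  move=> Hy; have HD' : #|D :\ x :\ y| = k.
    by move: HDx; rewrite (cardsD1 y (D :\ x)) Hy add1n => -[].
  have := sum_porbits_pair Hx Hy (IH k (leqW (ltnSn k)) _ (glue s x y) HD').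
  by rewrite card_matchings_on HD'.
rewrite (big_matchings_on _ _ Hx) (le_trans (ler_sum _ step)) //.
rewrite -mulr_sumr big_split /= sumr_const HDx -mulr_suml -natr_sum.
have := sum_proximity_le s x (D :\ x); rewrite -(ler_nat R) => Hprox.
rewrite card_matchings_on Hk /cycle_bound Hk /= natrM [_ * (nmatch k)%:R]mulrC -mulrA.
rewrite ler_wpM2l ?ler0n //.
have -> : (k.+1)%:R * (#|~: D|%:R + 3 * (harm2 k + (k.+1)%:R^-1) + (nfix s D)%:R / 2)
          = c *+ k.+1 + 3 :> R.
  by rewrite /c -mulr_natl; field; rewrite nat1r pnatr_eq0.
rewrite lerD2l; lra.
Qed.

End CycleBound.

Section Surface.
Variable n : nat.
Implicit Types (m : {perm side n}) (c d : corner n).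

Definition next_corner (c : side n) : side n := (c.1, ordS c.2).
Definition prev_corner (c : side n) : side n := (c.1, ord_pred c.2).

Lemma next_cornerK : cancel next_corner prev_corner.
Proof. by case=> t i; rewrite /next_corner /prev_corner /= ordSK. Qed.

Definition rotate : {perm side n} := perm (can_inj next_cornerK).

Lemma rotateE c : rotate c = (c.1, ordS c.2).
Proof. by rewrite permE. Qed.

Lemma glue_relE m c d : is_matching m ->
  glue_rel m c d = (d == (m * rotate)%g c) || (c == (m * rotate)%g d).
Proof.
move=> /forallP Hm.
have inv z : m (m z) = z by have /andP[_ /eqP] := Hm z.
rewrite /glue_rel !permM !rotateE.
apply/existsP/orP => [[[t i] /orP[/andP[/eqP -> /eqP ->]|/andP[/eqP -> /eqP ->]]]|[/eqP ->|/eqP ->]].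
- by left.
- by right; rewrite -!surjective_pairing inv.
- by exists c; apply/orP; left; case: c => t i; rewrite /= !eqxx.
by exists (m d); apply/orP; right; rewrite inv -surjective_pairing !eqxx.
Qed.

Lemma connect_sym_glue_rel m c d : is_matching m ->
  connect (sym_glue_rel m) c d = (d \in porbit (m * rotate)%g c).
Proof.
move=> Hm; set phi := (m * rotate)%g.
have symE a b : sym_glue_rel m a b = (b == phi a) || (a == phi b).
  by rewrite /sym_glue_rel !glue_relE //; case: (_ == _); case: (_ == _).
apply/idP/idP.
  move/connectP => [p Hp ->]; elim: p c Hp => [|z p IHp] c /=; first by rewrite porbit_id.
  case/andP => e /IHp; suff -> : porbit phi z = porbit phi c by [].
  rewrite symE in e; case/orP: e => /eqP ->.
    by have := porbit_perm phi 1 c; rewrite expg1.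
  by have := porbit_perm phi 1 z; rewrite expg1 => ->.
move/porbitP => [i ->]; elim: i => [|i IHi]; first by rewrite expg0 perm1 connect0.
apply: connect_trans IHi _; apply: connect1.
by rewrite symE expgSr permM eqxx.
Qed.

Lemma num_verticesE m : is_matching m -> num_vertices m = #|porbits (m * rotate)%g|.
Proof.
move=> Hm; rewrite /num_vertices; congr #|pred_of_set _|.
apply: eq_imset => c; apply/setP => d.
by rewrite finset.in_set connect_sym_glue_rel.
Qed.

Lemma matchingsE : matchings n = matchings_on [set: side n].
Proof.
apply/setP => m; rewrite /matchings /matchings_on !finset.in_set /is_matching.
by apply: eq_forallb => z; rewrite finset.in_setT.
Qed.

Lemma nfix_rotate : nfix rotate [set: side n] = 0%N.
Proof.
rewrite /nfix big1 // => -[t i] _; rewrite rotateE /=.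
apply/eqP; rewrite xpair_eqE eqxx /=.
by case: i => [[|[|[|]]] //] ?.
Qed.

End Surface.

Section Estimates.
Local Open Scope ring_scope.
Variable R : realType.

Lemma expected_vertices_le_harm2 n : expected_vertices R n <= 3 * harm2 R (n * 3).
Proof.
have := sum_porbits_matchings_on R [set: side n] (rotate n).
rewrite /cycle_bound finset.setCT cards0 nfix_rotate cardsT card_prod !card_ord.
rewrite mul0r !addr0 add0r -matchingsE => Hsum.
rewrite /expected_vertices (eq_bigr (fun m => (#|porbits (m * rotate n)%g|)%:R)) => [|m]; last first.
  by rewrite finset.in_set => /num_verticesE->.
have [->|M0] := eqVneq #|matchings n| 0%N; first by rewrite invr0 mulr0 mulr_ge0 ?harm2_ge0.
by rewrite ler_pdivrMr ?ltr0n ?lt0n // mulrC.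
Qed.

Lemma harm2_double_le k : harm2 R (k.+1).*2 <= 1 + ln ((k.*2).+1)%:R / 2.
Proof.
elim: k => [|k IH]; first by rewrite /= ln1 mul0r addr0 add0r invr1.
move: IH; rewrite !doubleS /= => IH.
have -> : ((k.*2).+3)%:R = ((k.*2).+1)%:R + 2 :> R by rewrite -addn2 natrD.
set A : R := ((k.*2).+1)%:R in IH *.
have A0 : 0 < A by rewrite ltr0n.
have B0 : 0 < A + 2 by rewrite addr_gt0.
have : ln (A / (A + 2)) <= - (2 / (A + 2)).
  have -> : A / (A + 2) = 1 + - (2 / (A + 2)) by field; rewrite gt_eqF.
  by rewrite le_ln1Dx // ltrNl opprK ltr_pdivrMr // mul1r ltrDr.
rewrite ln_div ?posrE // => Hln; clearbody A; lra.
Qed.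

End Estimates.

Theorem theorem2p1 (R : realType) (n : nat) (hn : ~~ odd n) :
  (expected_vertices R n <= 3 / 2 * ln (n%:R : R) + 6)%R.
Proof.
apply: (le_trans (expected_vertices_le_harm2 R n)).
case: n hn => [|n] hn; first by rewrite /= ln0 //; lra.
have [k Hk] : exists k, (n.+1 * 3 = (k.+1).*2)%N.
  exists (3 * (n.+1)./2).-1.
  by move: (odd_double_half n.+1); rewrite (negbTE hn) add0n; lia.
have Hln : (ln ((k.*2).+1)%:R <= ln 3 + ln (n.+1)%:R :> R)%R.
  by rewrite -lnM ?posrE // ler_ln ?posrE // -natrM ler_nat; lia.
have ln3 : (ln 3 <= 2 :> R)%R.
  have := @le_ln1Dx R 2; rewrite (_ : 1 + 2 = 3)%R; last by ring.
  by apply; lra.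
have := harm2_double_le R k; rewrite -Hk; lra.
Qed.
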